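(* There exists $\alpha\in\mu_{p-1}\subset\mathbb Z_p$ such that for every prime number $\ell$ with $\ell\ge p^2$ and $\ell\equiv\alpha\pmod p$, and $\zeta_\ell$ a primitive $\ell$-th root of unity, $$\mathrm{Tr}_{\mathbb Q(\zeta_\ell)/\mathbb Q}\left(\frac{\zeta_\ell^{p+1}+\zeta_\ell^{p-1}}{(\zeta_\ell^p-1)^2}\right)\not\equiv 0\pmod p,$$ i.e. this rational number (which is $p$-integral) has $p$-adic valuation $0$.
   Context: $p\ge5$ is a prime; $\mu_{p-1}\subset\mathbb Z_p$ denotes the $(p-1)$-th roots of unity in $\mathbb Z_p$. *)

From mathcomp Require Import all_boot all_order all_algebra all_field.
Set Implicit Arguments. Unset Strict Implicit. Unset Printing Implicit Defensive.
Import Order.TTheory GRing.Theory Num.Theory.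
Local Open Scope ring_scope.

Definition xi (p : nat) (z : algC) : algC :=
  (z ^+ p.+1 + z ^+ p.-1) / (z ^+ p - 1) ^+ 2.

(* Trace from Q(zeta_l) to Q for l prime, of an element f(zeta) with f a
   rational function over Q: the sum of its Galois conjugates
   sigma_k(f(zeta)) = f(zeta^k), k = 1, ..., l-1. *)
Definition cyc_trace (l : nat) (f : algC -> algC) (z : algC) : algC :=
  \sum_(1 <= k < l) f (z ^+ k).

Definition padic_val0 (p : nat) (q : rat) : bool :=
  ~~ (p%:Z %| numq q)%Z && ~~ (p%:Z %| denq q)%Z.

From mathcomp Require Import all_boot all_order all_algebra all_field.
From mathcomp Require Import ring zify.
Set Implicit Arguments. Unset Strict Implicit. Unset Printing Implicit Defensive.
Import Order.TTheory GRing.Theory Num.Theory.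
Local Open Scope ring_scope.

(* Let r be the inverse of p modulo l. Since zeta^r is again a primitive root,
   the trace is the sum over the l-th roots of unity w <> 1 of
   (w^(1+r) + w^(1-r)) / (w - 1)^2; the sums of w^s / (w - 1)^k (k = 1, 2) are
   determined by their first differences in s and by the vanishing of their sum
   over s = 1..l, which gives Tr = r(l - r) - (l^2 - 1)/6.  If p divided this
   integer then, with a = l mod p, 6r(a - r) = a^2 - 1 in F_p, i.e.
   (6r - 3a)^2 = 3(a^2 + 2).  So it suffices that 3(a^2 + 2) be a non-square:
   otherwise 2 (from a = 2) and 3 (from a^2 = 2) would be squares, then every
   x^2 + 2 with x <> 0 would be a square, and climbing from 1 and 2 by steps
   of 2, every element of F_p would be a square, which is impossible since
   squaring identifies 1 and -1. *)

Lemma sum_expr_unity_root_eq0 (R : idomainType) n (y : R) :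
  y ^+ n = 1 -> y != 1 -> \sum_(i < n) y ^+ i = 0.
Proof.
move=> yn1 y_neq1; have : (y - 1) * \sum_(i < n) y ^+ i = 0.
  by rewrite -subrX1 yn1 subrr.
by move/eqP; rewrite mulf_eq0 subr_eq0 (negbTE y_neq1) => /eqP.
Qed.

Lemma sum_nat_pred (F : numFieldType) n :
  \sum_(1 <= s < n.+1) (s%:R - 1 : F) = n%:R * (n%:R - 1) / 2.
Proof.
elim: n => [|n IHn]; first by rewrite big_geq // !mul0r.
by rewrite big_nat_recr //= IHn -addn1 natrD; field.
Qed.

Lemma sum_nat_pred_mul (F : numFieldType) n (L : F) :
  \sum_(1 <= s < n.+1) (s%:R - 1) * (L + 1 - s%:R) =
  (3 * L * n%:R * (n%:R - 1) - (n%:R - 1) * n%:R * (2 * n%:R - 1)) / 6.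
Proof.
elim: n => [|n IHn]; first by rewrite big_geq //; field.
by rewrite big_nat_recr //= IHn -addn1 natrD; field.
Qed.

Section UnityRootFractionSums.

Variables (F : numFieldType) (l : nat) (z : F).
Hypothesis z_prim : l.-primitive_root z.

Let l_gt0 : (0 < l)%N := prim_order_gt0 z_prim.
Let l_neq0 : (l%:R : F) != 0 := prim_root_natf_neq0 z_prim.

(* As 1 / 0 = 0, the term i = 0 vanishes when k > 0: this is the sum of
   w^s / (w - 1)^k over the l-th roots of unity w <> 1. *)
Definition frac_sum k s := \sum_(i < l) (z ^+ i) ^+ s / (z ^+ i - 1) ^+ k.

Lemma sum_prim_root_expr_eq0 s : ~~ (l %| s)%N -> \sum_(i < l) (z ^+ i) ^+ s = 0.
Proof.
rewrite (prim_order_dvd z_prim) => zs_neq1.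
under eq_bigr do rewrite exprAC.
by apply: sum_expr_unity_root_eq0 zs_neq1; rewrite exprAC (prim_expr_order z_prim) expr1n.
Qed.

Lemma sum_frac_sum_eq0 k : (0 < k)%N -> \sum_(1 <= s < l.+1) frac_sum k s = 0.
Proof.
move=> k_gt0; rewrite exchange_big /=; apply: big1 => i _; rewrite -mulr_suml.
have [->|zi_neq1] := eqVneq (z ^+ i) 1.
  by rewrite subrr expr0n gtn_eqF // invr0 mulr0.
rewrite big_add1 /= big_mkord; under eq_bigr do rewrite exprS.
rewrite -mulr_sumr sum_expr_unity_root_eq0 ?mulr0 ?mul0r //.
by rewrite exprAC (prim_expr_order z_prim) expr1n.
Qed.

Lemma frac_sum_succ k s :
  frac_sum k.+2 s.+1 - frac_sum k.+2 s = frac_sum k.+1 s.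
Proof.
rewrite /frac_sum -sumrB; apply: eq_bigr => i _.
have [->|zi_neq1] := eqVneq (z ^+ i) 1.
  by rewrite subrr !expr0n /= !invr0 !mulr0 subrr.
have zi1_neq0 : z ^+ i - 1 != 0 by rewrite subr_eq0.
have := expf_neq0 k zi1_neq0; rewrite !exprS.
by move: (_ ^+ k) (_ ^+ s) => E Y E_neq0; field; apply/andP.
Qed.

Lemma frac_sum1_succ s : ~~ (l %| s)%N -> frac_sum 1 s.+1 - frac_sum 1 s = -1.
Proof.
move=> l_ndvd_s.
have -> : frac_sum 1 s.+1 - frac_sum 1 s =
           \sum_(i < l) ((z ^+ i) ^+ s - (i == 0 :> nat)%:R).
  rewrite /frac_sum -sumrB; apply: eq_bigr => i _.
  have -> : (i == 0 :> nat) = (z ^+ i == 1).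
    rewrite -(prim_order_dvd z_prim); case: i => -[|i] /= lt_il; first by rewrite dvdn0.
    by rewrite gtnNdvd.
  have [->|zi_neq1] := eqVneq (z ^+ i) 1.
    by rewrite subrr expr1 invr0 !mulr0 subrr expr1n mulr1n subrr.
  have zi1_neq0 : z ^+ i - 1 != 0 by rewrite subr_eq0.
  by rewrite /= subr0 !expr1 exprS; field.
rewrite sumrB sum_prim_root_expr_eq0 // (bigD1 (Ordinal l_gt0)) //= big1 ?addr0 ?sub0r //.
by move=> i; rewrite -val_eqE /= => /negbTE ->.
Qed.

Lemma frac_sum1E s : (1 <= s <= l)%N -> frac_sum 1 s = (l%:R + 1) / 2 - s%:R.
Proof.
have shift t : (1 <= t <= l)%N -> frac_sum 1 t = frac_sum 1 1 - (t%:R - 1).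
  elim: t => [|t IHt] // /andP[_ lt_tl]; have [->|t_gt0] := posnP t.
    by rewrite subrr subr0.
  have := frac_sum1_succ (negbT (gtnNdvd t_gt0 lt_tl)).
  rewrite IHt ?t_gt0 1?ltnW // => /eqP; rewrite subr_eq => /eqP ->.
  by rewrite -[t.+1]addn1 natrD; ring.
have := @sum_frac_sum_eq0 1 isT.
rewrite (eq_big_nat _ _ (fun t (ht : (1 <= t < l.+1)%N) => shift t ht)).
rewrite sumrB sumr_const_nat sum_nat_pred subn1 /= => sum0.
have frac_sum1_1 : frac_sum 1 1 = (l%:R - 1) / 2.
  apply: (mulfI l_neq0); apply/eqP; rewrite -subr_eq0 -[X in _ == X]sum0 mulr_natl.
  by apply/eqP; field.
by move=> s_range; rewrite shift // frac_sum1_1; field.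
Qed.

Lemma frac_sum2E s : (1 <= s <= l)%N ->
  frac_sum 2 s = (s%:R - 1) * (l%:R + 1 - s%:R) / 2 - (l%:R ^+ 2 - 1) / 12.
Proof.
have shift t : (1 <= t <= l)%N ->
    frac_sum 2 t = frac_sum 2 1 + (t%:R - 1) * (l%:R + 1 - t%:R) / 2.
  elim: t => [|t IHt] // /andP[_ lt_tl]; have [->|t_gt0] := posnP t.
    by rewrite subrr !mul0r addr0.
  have := frac_sum_succ 0 t.
  rewrite IHt ?t_gt0 1?ltnW // frac_sum1E ?t_gt0 1?ltnW // => /eqP.
  by rewrite subr_eq => /eqP ->; rewrite -[t.+1]addn1 natrD; field.
have := @sum_frac_sum_eq0 2 isT.
rewrite (eq_big_nat _ _ (fun t (ht : (1 <= t < l.+1)%N) => shift t ht)).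
rewrite big_split sumr_const_nat -mulr_suml sum_nat_pred_mul subn1 /= => sum0.
have frac_sum2_1 : frac_sum 2 1 = - (l%:R ^+ 2 - 1) / 12.
  apply: (mulfI l_neq0); apply/eqP; rewrite -subr_eq0 -[X in _ == X]sum0 mulr_natl.
  by apply/eqP; field.
by move=> s_range; rewrite shift // frac_sum2_1; field.
Qed.

End UnityRootFractionSums.

Lemma sum_prim_root_eq (F : fieldType) (V : nmodType) (f : F -> V) l (z w : F) :
    l.-primitive_root z -> l.-primitive_root w ->
  \sum_(i < l) f (z ^+ i) = \sum_(i < l) f (w ^+ i).
Proof.
move=> z_prim w_prim; have l_gt0 := prim_order_gt0 z_prim.
have [k w_eq] := prim_rootP z_prim (prim_expr_order w_prim).
pose g (i : 'I_l) : 'I_l := Ordinal (ltn_pmod (k * i) l_gt0).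
have g_inj : injective g.
  move=> i j /(congr1 val) /= /eqP eq_ki_kj; apply/ord_inj/eqP.
  rewrite -(modn_small (ltn_ord i)) -(modn_small (ltn_ord j)).
  by rewrite -(eq_prim_root_expr w_prim) w_eq -!exprM (eq_prim_root_expr z_prim).
rewrite (reindex_inj g_inj); apply: eq_bigr => i _.
by rewrite /= (prim_expr_mod z_prim) w_eq exprM.
Qed.

Lemma xi_expr_inv p l r (x : algC) : (0 < p)%N -> (r <= l)%N -> x ^+ l = 1 ->
    (r * p = 1 %[mod l])%N ->
  xi p (x ^+ r) = (x ^+ r.+1 + x ^+ (l.+1 - r)) / (x - 1) ^+ 2.
Proof.
move=> p_gt0 le_rl xl1 rp1; rewrite /xi.
have xr_neq0 : x ^+ r != 0.
  apply: contraTneq (oner_neq0 algC) => xr0.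
  by rewrite -xl1 -(subnKC le_rl) exprD xr0 mul0r eqxx.
have xrp : (x ^+ r) ^+ p = x by rewrite -exprM -(expr_mod _ xl1) rp1 expr_mod ?expr1.
have -> : (x ^+ r) ^+ p.+1 = x ^+ r.+1 by rewrite exprSr xrp exprS.
have -> : (x ^+ r) ^+ p.-1 = x ^+ (l.+1 - r).
  apply: (mulIf xr_neq0); rewrite -exprSr prednK // xrp -exprD subnK 1?leqW //.
  by rewrite exprS xl1 mulr1.
by rewrite xrp.
Qed.

Lemma cyc_trace_xi p l r (z : algC) : l.-primitive_root z -> (0 < p)%N ->
    (0 < r < l)%N -> (r * p = 1 %[mod l])%N ->
  cyc_trace l (xi p) z = (r * (l - r))%:R - (l%:R ^+ 2 - 1) / 6.
Proof.
move=> z_prim p_gt0 /andP[r_gt0 lt_rl] rp1.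
have l_gt1 : (1 < l)%N := leq_ltn_trans r_gt0 lt_rl.
have le_rl : (r <= l)%N := ltnW lt_rl.
have xi1 : xi p 1 = 0 by rewrite /xi !expr1n subrr expr0n /= invr0 mulr0.
have zr_prim : l.-primitive_root (z ^+ r).
  rewrite prim_root_exp_coprime // modn_coprime //; exists p.
  by rewrite rp1 modn_small.
have zil1 (i : nat) : (z ^+ i) ^+ l = 1 by rewrite exprAC (prim_expr_order z_prim) expr1n.
transitivity (\sum_(i < l) xi p ((z ^+ r) ^+ i)).
  rewrite -(sum_prim_root_eq _ z_prim zr_prim).
  rewrite -(big_mkord xpredT (fun i => xi p (z ^+ i))).
  by rewrite big_ltn 1?ltnW // expr0 xi1 add0r.
under eq_bigr do rewrite exprAC (xi_expr_inv p_gt0 le_rl (zil1 _) rp1) mulrDl.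
rewrite big_split /= -/(frac_sum l z 2 r.+1) -/(frac_sum l z 2 (l.+1 - r)).
rewrite !(frac_sum2E z_prim); try lia.
rewrite natrM (natrB _ le_rl) (natrB _ (leqW le_rl)) -[r.+1]addn1 -[l.+1]addn1 !natrD.
by field.
Qed.

Lemma modn_inv_exists p l : (1 < l)%N -> coprime p l ->
  exists2 r, (0 < r < l)%N & (r * p = 1 %[mod l])%N.
Proof.
move=> l_gt1 co_pl; have p_gt0 : (0 < p)%N.
  by case: p co_pl => // /eqP; rewrite gcd0n => l1; rewrite l1 in l_gt1.
case/(coprimeP _ p_gt0): co_pl => -[u v] /= uv.
have up1 : (u %% l * p = 1 %[mod l])%N.
  by rewrite modnMml (_ : u * p = v * l + 1)%N ?modnMDl //; lia.
exists (u %% l)%N => //; apply/andP; split; last by rewrite ltn_pmod // ltnW.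
rewrite lt0n.
by apply/eqP => r0; move: up1; rewrite r0 mul0n mod0n modn_small.
Qed.

Lemma six_dvd_sqr_pred l : prime l -> (3 < l)%N -> (6 %| l ^ 2 - 1)%N.
Proof.
move=> l_pr l_gt3.
have ndvd q : prime q -> (q < l)%N -> ~~ (q %| l)%N.
  by move=> q_pr lt_ql; rewrite dvdn_prime2 // neq_ltn lt_ql.
have /(ndvd 2 isT) l_odd : (2 < l)%N by apply: ltnW.
have /(ndvd 3 isT) l_ndvd3 := l_gt3.
rewrite (_ : l ^ 2 - 1 = (l - 1) * (l + 1))%N; last by nia.
rewrite (@Gauss_dvd 2 3) //; apply/andP; split; first by apply: dvdn_mulr; lia.
have : (3 %| l - 1)%N || (3 %| l + 1)%N by lia.
by case/orP => h; [apply: dvdn_mulr | apply: dvdn_mull].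
Qed.

Lemma cyc_trace_xi_int p l r (z : algC) : l.-primitive_root z -> (0 < p)%N ->
    (0 < r < l)%N -> (r * p = 1 %[mod l])%N -> (6 %| l ^ 2 - 1)%N ->
  cyc_trace l (xi p) z = ((r * (l - r))%:Z - ((l ^ 2 - 1) %/ 6)%:Z)%:~R.
Proof.
move=> z_prim p_gt0 r_range rp1 six_dvd.
have l_gt0 : (0 < l ^ 2)%N by rewrite expn_gt0 (prim_order_gt0 z_prim).
rewrite (cyc_trace_xi z_prim p_gt0 r_range rp1) intrB -!pmulrn.
have -> : l%:R ^+ 2 - 1 = ((l ^ 2 - 1) %/ 6)%:R * 6 :> algC.
  by rewrite -natrM divnK // natrB // natrX.
by rewrite mulfK ?pnatr_eq0.
Qed.

Lemma padic_val0_int p (n : int) :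
  (1 < p)%N -> ~~ (p%:Z %| n)%Z -> padic_val0 p n%:~R.
Proof.
move=> p_gt1 p_ndvd_n; rewrite /padic_val0 numq_int denq_int p_ndvd_n.
by rewrite dvdzE /= dvdn1 neq_ltn p_gt1 orbT.
Qed.

Lemma finField_exists_nonsquare (F : finFieldType) :
  (2 : F) != 0 -> exists x : F, forall y, y ^+ 2 != x.
Proof.
move=> two_neq0; pose sqr (y : F) := y ^+ 2.
case: (pickP [pred x | x \notin codom sqr]) => [x /= x_nsq | all_sq].
  by exists x => y; apply: contraNneq x_nsq => <-; apply: codom_f.
have /image_injP sqr_inj : #|image sqr F| == #|F|.
  rewrite eqn_leq leq_image_card /=.
  by apply/subset_leq_card/subsetP => x _; move/negbFE: (all_sq x).
have sqrN1 : sqr (-1) = sqr 1 by rewrite /sqr sqrrN.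
by move: two_neq0; rewrite -[2]/(1 + 1) -[X in _ + X](sqr_inj _ _ _ _ sqrN1) ?subrr ?eqxx.
Qed.

Lemma complete_square (R : comPzRingType) (x a : R) :
  6 * (x * (a - x)) = a ^+ 2 - 1 -> (6 * x - 3 * a) ^+ 2 = 3 * (a ^+ 2 + 2).
Proof.
move=> h; apply/eqP; rewrite -subr_eq0.
have -> : (6 * x - 3 * a) ^+ 2 - 3 * (a ^+ 2 + 2) =
          - 6 * (6 * (x * (a - x)) - (a ^+ 2 - 1)) by ring.
by rewrite h subrr mulr0.
Qed.

Section PrimeField.

Variables (p : nat) (p_pr : prime p).

Lemma Fp_natr_neq0 n : (0 < n < p)%N -> (n%:R : 'F_p) != 0.
Proof.
case/andP=> n_gt0 n_lt_p; rewrite -(dvdn_pcharf (pchar_Fp p_pr)).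
by apply: contraTN n_lt_p => /(dvdn_leq n_gt0); rewrite -leqNgt.
Qed.

Lemma Fp_natr_repr (x : 'F_p) : exists2 k, (k < p)%N & x = k%:R.
Proof.
exists (nat_of_ord x); rewrite ?natr_Zp //.
by have := ltn_ord x; have := Fp_cast p_pr; lia.
Qed.

Lemma Fp_all_square_of_add2 :
    (exists c : 'F_p, c ^+ 2 = 2) ->
    (forall x : 'F_p, x != 0 -> exists y, y ^+ 2 = x ^+ 2 + 2) ->
  forall x : 'F_p, exists y, y ^+ 2 = x.
Proof.
move=> [c c2] sq_add2 x; have [k] := Fp_natr_repr x; move=> + ->{x}.
elim/ltn_ind: k => -[|[|[|j]]] IH lt_k_p.
- by exists 0; rewrite expr0n.
- by exists 1; rewrite expr1n.
- by exists c.
have [e e2] := IH j.+1 (leqnSn _) (ltnW (ltnW lt_k_p)).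
have e_neq0 : e != 0.
  apply: contraTneq (@Fp_natr_neq0 j.+1 (ltnW (ltnW lt_k_p))) => e0.
  by rewrite -e2 e0 expr0n.
have [y y2] := sq_add2 e e_neq0; exists y.
by rewrite y2 e2 -[j.+3]addn2 natrD.
Qed.

Lemma Fp_exists_nonsquare_3_sqr_add2 : (5 <= p)%N ->
  exists2 a : 'F_p, a != 0 & forall b, b ^+ 2 != 3 * (a ^+ 2 + 2).
Proof.
move=> p_ge5.
case: (pickP [pred a : 'F_p | (a != 0) && [forall b, b ^+ 2 != 3 * (a ^+ 2 + 2)]]).
  by move=> a /andP[a_neq0 /forallP a_ok]; exists a.
move=> no_a; have sq3 (a : 'F_p) : a != 0 -> exists b, b ^+ 2 = 3 * (a ^+ 2 + 2).
  move=> a_neq0; move: (no_a a); rewrite /= a_neq0 => /negbT/forallPn[b].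
  by rewrite negbK => /eqP b2; exists b.
have sqr_div (b c x : 'F_p) : c != 0 -> b ^+ 2 = c ^+ 2 * x -> (b / c) ^+ 2 = x.
  by move=> c_neq0 b2; rewrite expr_div_n b2 [c ^+ 2 * _]mulrC mulfK ?expf_neq0.
have two_neq0 : (2 : 'F_p) != 0 by apply: Fp_natr_neq0; lia.
have three_neq0 : (3 : 'F_p) != 0 by apply: Fp_natr_neq0; lia.
have [c c2] : exists c : 'F_p, c ^+ 2 = 2.
  have [b b2] := sq3 2 two_neq0; exists (b / 3).
  by apply: sqr_div => //; rewrite b2; ring.
have c_neq0 : c != 0 by apply: contraNneq two_neq0 => c0; rewrite -c2 c0 expr0n.
have [d d2] : exists d : 'F_p, d ^+ 2 = 3.
  have [b b2] := sq3 c c_neq0; exists (b / 2).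
  by apply: sqr_div => //; rewrite b2 c2; ring.
have d_neq0 : d != 0 by apply: contraNneq three_neq0 => d0; rewrite -d2 d0 expr0n.
have [x x_nsq] := finField_exists_nonsquare two_neq0.
have [|y /eqP] := Fp_all_square_of_add2 (ex_intro _ c c2) _ x.
  move=> a a_neq0; have [b b2] := sq3 a a_neq0; exists (b / d).
  by apply: sqr_div => //; rewrite b2 d2.
by rewrite (negbTE (x_nsq y)).
Qed.

Lemma Fp_ndvd_trace_numerator (a : 'F_p) l r :
    (forall b, b ^+ 2 != 3 * (a ^+ 2 + 2)) -> (l%:R : 'F_p) = a ->
    (r <= l)%N -> (0 < l)%N -> (6 %| l ^ 2 - 1)%N ->
  ~~ (p%:Z %| (r * (l - r))%:Z - ((l ^ 2 - 1) %/ 6)%:Z)%Z.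
Proof.
move=> a_nsq la le_rl l_gt0 six_dvd.
rewrite (dvdz_pcharf (pchar_Fp p_pr)) intrB -!pmulrn subr_eq0.
apply/negP => /eqP m_eq_N; have : 6 * (r%:R * (a - r%:R)) = a ^+ 2 - 1.
  rewrite -la -(natrB _ le_rl) -natrM m_eq_N -natrM mulnC divnK //.
  by rewrite natrB ?expn_gt0 ?l_gt0 // natrX.
by move/complete_square/eqP; apply/negP; apply: a_nsq.
Qed.

End PrimeField.

Theorem lemma3p4 (p : nat) (hp : prime p) (hp5 : (5 <= p)%N) :
  exists a : nat, [/\ (0 < a)%N, (a < p)%N &
    forall (l : nat) (zeta : algC),
      prime l -> (p ^ 2 <= l)%N -> l = a %[mod p] ->
      l.-primitive_root zeta ->
      exists q : rat, ratr q = cyc_trace l (xi p) zeta /\ padic_val0 p q].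
Proof.
have [a a_neq0 a_nsq] := Fp_exists_nonsquare_3_sqr_add2 hp hp5.
have [k k_lt_p a_eq] := Fp_natr_repr hp a.
exists k; split => // [|l zeta l_pr le_p2_l l_mod zeta_prim].
  by rewrite lt0n; apply: contraNneq a_neq0 => k0; rewrite a_eq k0.
have lt_pl : (p < l)%N by nia.
have [r r_range rp1] : exists2 r, (0 < r < l)%N & (r * p = 1 %[mod l])%N.
  by apply: modn_inv_exists; rewrite ?prime_coprime ?dvdn_prime2 ?neq_ltn ?lt_pl //; lia.
have six_dvd : (6 %| l ^ 2 - 1)%N by apply: six_dvd_sqr_pred; lia.
exists ((r * (l - r))%:Z - ((l ^ 2 - 1) %/ 6)%:Z)%:~R; split.
  by rewrite ratr_int (cyc_trace_xi_int zeta_prim _ r_range rp1) //; lia.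
apply: padic_val0_int; first exact: prime_gt1.
apply: (Fp_ndvd_trace_numerator hp a_nsq _ _ _ six_dvd); try lia.
by rewrite a_eq -(Fp_nat_mod hp) l_mod Fp_nat_mod.
Qed.
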